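(* Let $\mathbf{T}\subset\mathbb{S}^3$ be a $\mathbb{Z}_2$-symmetric spherical tetrahedron with dihedral angles $A$, $B=E$, $C=F$, $D$ and edge lengths $l_A$, $l_B=l_E$, $l_C=l_F$, $l_D$, edge matrix $G^\star$ and Gram matrix $G$. Put $\Delta=\det G$, $\Delta^\star=\det G^\star$, and $$u=\sqrt{\frac{c^\star_{00}c^\star_{22}}{\Delta^\star}},\qquad v=\sqrt{\frac{c_{00}c_{22}}{\Delta}}.$$ Then $$u=\frac{\sin\frac{l_A+l_D}{2}}{\sin\frac{A+D}{2}}=\frac{\sin\frac{l_A-l_D}{2}}{\sin\frac{D-A}{2}}=\frac{\sin l_B}{\sin B}=\frac{\sin l_C}{\sin C}=v^{-1}.$$
   Context: A spherical tetrahedron $\mathbf{T}\subset\mathbb{S}^3\subset\mathbb{R}^4$ is the intersection of $\mathbb{S}^3$ with the cone over four linearly independent unit vectors $\mathrm{p}_0,\dots,\mathrm{p}_3$ (its vertices). Edge lengths $l_{ij}\in[0,\pi]$: $\cos l_{ij}=\langle \mathrm{p}_i,\mathrm{p}_j\rangle$; with $\mathrm{v}_i$ the outer unit normal to the face opposite $\mathrm{p}_i$, dihedral angles $\alpha_{ij}\in[0,\pi]$: $\cos\alpha_{ij}=-\langle\mathrm{v}_i,\mathrm{v}_j\rangle$. Notation: $l_A=l_{01}$, $l_B=l_{02}$, $l_C=l_{03}$, $l_D=l_{23}$, $l_E=l_{13}$, $l_F=l_{12}$, and $A,\dots,F$ are the dihedral angles along the edges of lengths $l_A,\dots,l_F$.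 The edge matrix is $G^\star=\begin{pmatrix}1&\cos l_A&\cos l_B&\cos l_C\\ \cos l_A&1&\cos l_F&\cos l_E\\ \cos l_B&\cos l_F&1&\cos l_D\\ \cos l_C&\cos l_E&\cos l_D&1\end{pmatrix}$ and the Gram matrix is $G=\begin{pmatrix}1&-\cos D&-\cos E&-\cos F\\ -\cos D&1&-\cos C&-\cos B\\ -\cos E&-\cos C&1&-\cos A\\ -\cos F&-\cos B&-\cos A&1\end{pmatrix}$ (rows/columns indexed $0,\dots,3$). $c_{ij}$ and $c^\star_{ij}$ denote the $(i,j)$-cofactors $(-1)^{i+j}\det(\text{minor})$ of $G$ and $G^\star$. $\mathbf{T}$ is $\mathbb{Z}_2$-symmetric if it is invariant under the rotation through $\pi$ about the axis through the midpoints of the edges $\mathrm{p}_0\mathrm{p}_1$ and $\mathrm{p}_2\mathrm{p}_3$; then $l_B=l_E$, $l_C=l_F$, $B=E$, $C=F$. The number $u$ is called the principal parameter and $v$ the dual parameter of $\mathbf{T}$. *)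

From mathcomp Require Import all_boot all_order all_algebra.
From mathcomp Require Import all_classical all_reals all_analysis.
Set Implicit Arguments. Unset Strict Implicit. Unset Printing Implicit Defensive.
Import Order.TTheory GRing.Theory Num.Theory.
Local Open Scope ring_scope.

Definition i0 : 'I_4 := @Ordinal 4 0 isT.
Definition i1 : 'I_4 := @Ordinal 4 1 isT.
Definition i2 : 'I_4 := @Ordinal 4 2 isT.
Definition i3 : 'I_4 := @Ordinal 4 3 isT.

Section Tet.
Variable R : realType.

Definition dotv (x y : 'rV[R]_4) : R := (x *m y^T) 0 0.

Definition spherical_tetrahedron (p : 'I_4 -> 'rV[R]_4) : Prop :=
  (forall i, dotv (p i) (p i) = 1) /\ \det (\matrix_(i, j) p i 0 j) != 0.

Definition outer_unit_normal (p v : 'I_4 -> 'rV[R]_4) (i : 'I_4) : Prop :=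
  [/\ dotv (v i) (v i) = 1,
      (forall j, j != i -> dotv (v i) (p j) = 0) &
      dotv (v i) (p i) < 0].

Definition edge_len (p : 'I_4 -> 'rV[R]_4) (i j : 'I_4) : R :=
  acos (dotv (p i) (p j)).

Definition dihedral (v : 'I_4 -> 'rV[R]_4) (i j : 'I_4) : R :=
  acos (- dotv (v i) (v j)).

(* Z_2-symmetry: invariance under the rotation through pi about the axis
   through the midpoints of p0p1 and p2p3, i.e. an orthogonal map of R^4
   swapping p0 <-> p1 and p2 <-> p3. *)
Definition Z2_symmetric (p : 'I_4 -> 'rV[R]_4) : Prop :=
  exists M : 'M[R]_4, M *m M^T = 1%:M /\
    [/\ p i0 *m M = p i1, p i1 *m M = p i0, p i2 *m M = p i3 & p i3 *m M = p i2].

Definition edge_matrix (p : 'I_4 -> 'rV[R]_4) : 'M[R]_4 :=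
  \matrix_(i, j) (if i == j then 1 else cos (edge_len p i j)).

Definition gram_matrix (v : 'I_4 -> 'rV[R]_4) : 'M[R]_4 :=
  \matrix_(i, j) (if i == j then 1 else - cos (dihedral v i j)).

End Tet.

From mathcomp Require Import all_boot all_order all_algebra.
From mathcomp Require Import all_classical all_reals all_analysis.
From mathcomp Require Import ring lra.
Set Implicit Arguments. Unset Strict Implicit. Unset Printing Implicit Defensive.
Import Order.TTheory GRing.Theory Num.Theory.
Local Open Scope ring_scope.

(* Let P and V be the matrices whose rows are the vertices p_i and the outer
   normals v_i.  Then V P^T = diag(e) with e_i = <v_i, p_i> < 0, hence
   V V^T = diag(e) adj(G* ) diag(e) / det G*: the normals are determined by
   the cofactors of the edge matrix, and cos(alpha_ij) = -c*_ij / sqrt(c*_ii c*_jj).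
   For a Z_2-symmetric tetrahedron G* has only four distinct entries and
   explicit cofactor identities give u sin B = sin l_B, u sin C = sin l_C,
   u^2 (1 - cos A cos D) = 1 - cos l_A cos l_D and
   u^2 (cos A - cos D) = cos l_D - cos l_A, from which the half-angle formulas
   follow by the product-to-sum formulas.  Exchanging the roles of P and V
   gives uv = 1. *)

Section CofactorFormulas.
Variable R : comPzRingType.

Lemma det_mx2 (f : nat -> nat -> R) :
  \det (\matrix_(i < 2, j < 2) f i j) = f 0 0 * f 1 1 - f 0 1 * f 1 0.
Proof.
rewrite (expand_det_row _ 0) !big_ord_recl big_ord0 /cofactor !det_mx11 !mxE /=.
by rewrite expr0 expr1; ring.
Qed.

Lemma det_mx3 (f : nat -> nat -> R) :
  \det (\matrix_(i < 3, j < 3) f i j) =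
    f 0 0 * (f 1 1 * f 2 2 - f 1 2 * f 2 1)
  - f 0 1 * (f 1 0 * f 2 2 - f 1 2 * f 2 0)
  + f 0 2 * (f 1 0 * f 2 1 - f 1 1 * f 2 0).
Proof.
rewrite (expand_det_row _ 0) !big_ord_recl big_ord0 /cofactor.
have minorE (i j : 'I_3) : \det (row' i (col' j (\matrix_(i < 3, j < 3) f i j))) =
    f (bump i 0) (bump j 0) * f (bump i 1) (bump j 1)
    - f (bump i 0) (bump j 1) * f (bump i 1) (bump j 0).
  rewrite -(det_mx2 (fun k l => f (bump i k) (bump j l))).
  by congr (\det _); apply/matrixP => k l; rewrite !mxE.
by rewrite !minorE !mxE /= !expr0 !expr1 ?expr2; ring.
Qed.

Lemma cofactor_mx4 (f : nat -> nat -> R) (i j : 'I_4) :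
  cofactor (\matrix_(i < 4, j < 4) f i j) i j =
  (-1) ^+ (i + j) * (let g k l := f (bump i k) (bump j l) in
    g 0 0 * (g 1 1 * g 2 2 - g 1 2 * g 2 1)
  - g 0 1 * (g 1 0 * g 2 2 - g 1 2 * g 2 0)
  + g 0 2 * (g 1 0 * g 2 1 - g 1 1 * g 2 0)).
Proof.
rewrite /cofactor -(det_mx3 (fun k l => f (bump i k) (bump j l))).
by congr (_ * \det _); apply/matrixP => k l; rewrite !mxE.
Qed.

(* The entries at positions 01, 02, 03, 23 of a symmetric matrix with unit
   diagonal that is invariant under the index permutation (0 1)(2 3). *)
Definition z2_entry (a b c d : R) (i j : nat) : R :=
  match i, j with
  | 0, 1 | 1, 0 => a
  | 0, 2 | 2, 0 | 1, 3 | 3, 1 => b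
  | 0, 3 | 3, 0 | 1, 2 | 2, 1 => c
  | 2, 3 | 3, 2 => d
  | _, _ => 1 end.

Definition z2_mx a b c d : 'M[R]_4 := \matrix_(i, j) z2_entry a b c d i j.

Lemma z2_mx_cofactor_diag (Q : 'M[R]_4) a b c d : Q = z2_mx a b c d ->
  cofactor Q i1 i1 = cofactor Q i0 i0 /\ cofactor Q i3 i3 = cofactor Q i2 i2.
Proof. by move=> ->; rewrite /z2_mx !cofactor_mx4 /=; split; ring. Qed.

Lemma z2_mx_cofactor_relations (Q : 'M[R]_4) a b c d : Q = z2_mx a b c d ->
  let k := cofactor Q in
  [/\ k i0 i0 * k i2 i2 - k i0 i1 * k i2 i3 = \det Q * (1 - a * d),
      k i0 i1 * k i2 i2 - k i2 i3 * k i0 i0 = \det Q * (d - a),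
      k i2 i2 ^+ 2 - k i2 i3 ^+ 2 = \det Q * (1 - a ^+ 2),
      k i0 i0 ^+ 2 - k i0 i1 ^+ 2 = \det Q * (1 - d ^+ 2) &
      [/\ k i0 i0 * k i2 i2 - k i1 i3 ^+ 2 = \det Q * (1 - b ^+ 2) &
          k i0 i0 * k i2 i2 - k i1 i2 ^+ 2 = \det Q * (1 - c ^+ 2)]].
Proof.
move=> -> k; rewrite /k (expand_det_row _ i0) !big_ord_recl big_ord0.
rewrite /z2_mx !cofactor_mx4 !mxE /= !expr0 !expr1 ?expr2.
by split; [ring | ring | ring | ring | split; ring].
Qed.
End CofactorFormulas.

Lemma dual_gram_adj (F : fieldType) n (X Y : 'M[F]_n.+1) (d : 'rV[F]_n.+1) i j :
  X *m Y^T = diag_mx d -> \det Y != 0 ->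
  \det (Y *m Y^T) * (X *m X^T) i j = d 0 i * cofactor (Y *m Y^T) j i * d 0 j.
Proof.
(* X = diag(d) Y^-T, so X X^T = diag(d) (Y Y^T)^-1 diag(d). *)
move=> XYd detY; set Q := Y *m Y^T.
have detQ : \det Q != 0 by rewrite det_mulmx det_tr mulf_neq0.
have YinvQ : Y^T *m \adj Q *m Y = (\det Q)%:M.
  have : Y *m ((\det Q)^-1 *: (Y^T *m \adj Q)) = 1%:M.
    by rewrite -scalemxAr mulmxA mul_mx_adj scale_scalar_mx mulVf.
  move/mulmx1C; rewrite -scalemxAl => Yinv.
  by rewrite -[LHS]scale1r -(mulfV detQ) -scalerA Yinv scale_scalar_mx mulr1.
have YXd : Y *m X^T = diag_mx d by rewrite -tr_diag_mx -XYd trmx_mul trmxK.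
have : (\det Q) *: (X *m X^T) = diag_mx d *m \adj Q *m diag_mx d.
  rewrite -{1}XYd -YXd !mulmxA -(mulmxA X) -(mulmxA X) YinvQ.
  by rewrite mul_mx_scalar scalemxAl.
by rewrite mul_diag_mx mul_mx_diag => /matrixP /(_ i j); rewrite !mxE.
Qed.

Section Vectors.
Variable R : realType.
Implicit Types x y : 'rV[R]_4.

Definition vecs_mx (x : 'I_4 -> 'rV[R]_4) : 'M[R]_4 := \matrix_(i, j) x i 0 j.

Lemma dotvE x y : dotv x y = \sum_k x 0 k * y 0 k.
Proof. by rewrite /dotv !mxE; apply: eq_bigr => k _; rewrite mxE. Qed.

Lemma dotvC x y : dotv x y = dotv y x.
Proof. by rewrite !dotvE; apply: eq_bigr => k _; rewrite mulrC. Qed.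

Lemma vecs_mx_mul_tr (x y : 'I_4 -> 'rV[R]_4) :
  vecs_mx x *m (vecs_mx y)^T = \matrix_(i, j) dotv (x i) (y j).
Proof.
by apply/matrixP => i j; rewrite !mxE dotvE; apply: eq_bigr => k _; rewrite !mxE.
Qed.

Lemma sum_sqr_subZ x y (s : R) :
  \sum_k (x 0 k - s * y 0 k) ^+ 2 = dotv x x - 2 * s * dotv x y + s ^+ 2 * dotv y y.
Proof.
rewrite !dotvE !mulr_sumr -sumrB -big_split /=; apply: eq_bigr => k _; ring.
Qed.

Lemma dotv_sqr_le1 x y : dotv x x = 1 -> dotv y y = 1 -> dotv x y ^+ 2 <= 1.
Proof.
move=> x1 y1; have sqr_sum_ge0 s : 0 <= \sum_k (x 0 k - s * y 0 k) ^+ 2.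
  by apply: sumr_ge0 => k _; exact: sqr_ge0.
have := sqr_sum_ge0 1; have := sqr_sum_ge0 (-1).
rewrite !sum_sqr_subZ x1 y1; nra.
Qed.

Lemma sqr_le1_itv (r : R) : r ^+ 2 <= 1 -> r \in `[-1, 1].
Proof. by move=> r2; rewrite in_itv /=; apply/andP; split; nra. Qed.

Lemma dotv_sqr_lt1 (x : 'I_4 -> 'rV[R]_4) i j : (forall k, dotv (x k) (x k) = 1) ->
  \det (vecs_mx x) != 0 -> i != j -> dotv (x i) (x j) ^+ 2 < 1.
Proof.
move=> x1 detx ij; rewrite lt_neqAle dotv_sqr_le1 ?x1 // andbT.
apply/negP => /eqP s2; set s := dotv (x i) (x j) in s2.
have : \sum_k (x i 0 k - s * x j 0 k) ^+ 2 = 0.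
  by rewrite sum_sqr_subZ !x1 -/s mulr1 -mulrA -expr2 s2; ring.
move/psumr_eq0P => /(_ (fun k _ => sqr_ge0 _)) xi_sxj.
have : (delta_mx 0 i - s *: delta_mx 0 j : 'rV[R]_4) *m vecs_mx x = 0.
  rewrite mulmxBl -scalemxAl -!rowE; apply/rowP => k; rewrite !mxE.
  by apply/eqP; rewrite -sqrf_eq0 xi_sxj.
move/(congr1 (mulmx^~ (invmx (vecs_mx x)))).
rewrite mulmxK ?unitmxE ?unitfE // mul0mx => /rowP /(_ i) /eqP.
by rewrite !mxE !eqxx (negbTE ij) /= mulr0 subr0 oner_eq0.
Qed.

End Vectors.

Lemma ord4P (i : 'I_4) : [\/ i = i0, i = i1, i = i2 | i = i3].
Proof.
case: i => [[|[|[|[|//]]]] ?]; [constructor 1|constructor 2|constructor 3|constructor 4];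
  exact: val_inj.
Qed.

Section Tetrahedron.
Variable R : realType.
Variables p v : 'I_4 -> 'rV[R]_4.
Hypotheses (p_unit : forall i, dotv (p i) (p i) = 1)
  (p_free : \det (vecs_mx p) != 0) (v_normal : forall i, outer_unit_normal p v i).

Let e : 'rV[R]_4 := \row_i dotv (v i) (p i).

Let v_unit i : dotv (v i) (v i) = 1. Proof. by case: (v_normal i). Qed.

Let e_lt0 i : e 0 i < 0. Proof. by rewrite mxE; case: (v_normal i). Qed.

Lemma cos_edge_len i j : cos (edge_len p i j) = dotv (p i) (p j).
Proof. by rewrite acosK // sqr_le1_itv // dotv_sqr_le1. Qed.

Lemma edge_len_gt0_ltpi i j : i != j -> 0 < edge_len p i j < pi.
Proof.
move=> ij; have ij2 := dotv_sqr_lt1 p_unit p_free ij.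
by apply/andP; split; [apply: acos_gt0 | apply: acos_ltpi];
  apply/andP; split; nra.
Qed.

Lemma cos_dihedral i j : cos (dihedral v i j) = - dotv (v i) (v j).
Proof. by rewrite acosK // sqr_le1_itv // sqrrN dotv_sqr_le1. Qed.

Lemma dihedral_itv i j : 0 <= dihedral v i j <= pi.
Proof.
have vij : - dotv (v i) (v j) \in `[-1, 1].
  by rewrite sqr_le1_itv // sqrrN dotv_sqr_le1.
by rewrite in_itv /= in vij; rewrite acos_ge0 ?acos_lepi.
Qed.

Lemma edge_matrixE : edge_matrix p = vecs_mx p *m (vecs_mx p)^T.
Proof.
rewrite vecs_mx_mul_tr; apply/matrixP => i j; rewrite !mxE.
by case: eqP => [->|_]; rewrite ?p_unit ?cos_edge_len.
Qed.

Lemma gram_matrixE : gram_matrix v = vecs_mx v *m (vecs_mx v)^T.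
Proof.
rewrite vecs_mx_mul_tr; apply/matrixP => i j; rewrite !mxE.
by case: eqP => [->|_]; rewrite ?v_unit ?cos_dihedral ?opprK.
Qed.

Let normals_vertices_diag : vecs_mx v *m (vecs_mx p)^T = diag_mx e.
Proof.
rewrite vecs_mx_mul_tr; apply/matrixP => i j; rewrite !mxE.
have [<-|ij] := eqVneq i j; first by rewrite mulr1n.
by case: (v_normal i) => _ vp _; rewrite vp 1?eq_sym.
Qed.

Let det_normals_vertices :
  \det (vecs_mx v) * \det (vecs_mx p) = e 0 i0 * e 0 i1 * e 0 i2 * e 0 i3.
Proof.
rewrite -(det_tr (vecs_mx p)) -det_mulmx normals_vertices_diag det_diag.
rewrite !big_ord_recl big_ord0 mulr1 !mulrA.
by congr (_ * _ * _ * _); apply/congr1/val_inj.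
Qed.

Let v_free : \det (vecs_mx v) != 0.
Proof.
have : e 0 i0 * e 0 i1 * e 0 i2 * e 0 i3 != 0 by rewrite !mulf_neq0 // ltr0_neq0.
by rewrite -det_normals_vertices mulf_eq0 negb_or => /andP[].
Qed.

Lemma det_edge_matrix_gt0 : 0 < \det (edge_matrix p).
Proof. by rewrite edge_matrixE det_mulmx det_tr -expr2 exprn_even_gt0. Qed.

Let dotv_normals_cofactor i j : \det (edge_matrix p) * dotv (v i) (v j) =
  e 0 i * cofactor (edge_matrix p) j i * e 0 j.
Proof.
by rewrite edge_matrixE -(dual_gram_adj _ _ normals_vertices_diag) // (vecs_mx_mul_tr v) mxE.
Qed.

Let dotv_vertices_cofactor i j : \det (gram_matrix v) * dotv (p i) (p j) =
  e 0 i * cofactor (gram_matrix v) j i * e 0 j.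
Proof.
have vertices_normals_diag : vecs_mx p *m (vecs_mx v)^T = diag_mx e.
  by rewrite -tr_diag_mx -normals_vertices_diag trmx_mul trmxK.
by rewrite gram_matrixE -(dual_gram_adj _ _ vertices_normals_diag) // (vecs_mx_mul_tr p) mxE.
Qed.

Let e_neq0 i : e 0 i != 0. Proof. by rewrite ltr0_neq0. Qed.

Let cofactor_edge_matrix_diag i :
  cofactor (edge_matrix p) i i = \det (edge_matrix p) / e 0 i ^+ 2.
Proof. by rewrite -[\det _]mulr1 -(v_unit i) dotv_normals_cofactor; field. Qed.

Let cofactor_gram_matrix_diag i :
  cofactor (gram_matrix v) i i = \det (gram_matrix v) / e 0 i ^+ 2.
Proof. by rewrite -[\det _]mulr1 -(p_unit i) dotv_vertices_cofactor; field. Qed.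

Lemma cofactor_edge_matrix_gt0 i : 0 < cofactor (edge_matrix p) i i.
Proof.
by rewrite cofactor_edge_matrix_diag divr_gt0 ?det_edge_matrix_gt0 // exprn_even_gt0 ?e_neq0.
Qed.

Lemma cofactor_edge_matrixC i j :
  cofactor (edge_matrix p) i j = cofactor (edge_matrix p) j i.
Proof. by rewrite -cofactor_tr edge_matrixE trmx_mul trmxK. Qed.

Lemma cos_dihedral_cofactor i j : let c := cofactor (edge_matrix p) in
  cos (dihedral v i j) = - c i j / Num.sqrt (c i i * c j j).
Proof.
move=> c; have D_gt0 := det_edge_matrix_gt0.
have -> : Num.sqrt (c i i * c j j) = \det (edge_matrix p) / (e 0 i * e 0 j).
  rewrite /c !cofactor_edge_matrix_diag.
  have -> : forall D : R, D / e 0 i ^+ 2 * (D / e 0 j ^+ 2) = (D / (e 0 i * e 0 j)) ^+ 2.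
    by move=> D; field; rewrite !e_neq0.
  by rewrite sqrtr_sqr ger0_norm // divr_ge0 ?ltW // nmulr_rgt0; apply: e_lt0.
rewrite cos_dihedral -[dotv _ _](mulKf (lt0r_neq0 D_gt0)) dotv_normals_cofactor.
by rewrite /c cofactor_edge_matrixC; field; rewrite !e_neq0 (lt0r_neq0 D_gt0).
Qed.

Lemma gram_cofactor_duality : let c := cofactor (edge_matrix p) in
  let g := cofactor (gram_matrix v) in
  g i0 i0 * g i2 i2 / \det (gram_matrix v) * (c i1 i1 * c i3 i3 / \det (edge_matrix p)) = 1.
Proof.
move=> c g; rewrite /c /g !cofactor_edge_matrix_diag !cofactor_gram_matrix_diag.
have D_neq0 : \det (edge_matrix p) != 0 by rewrite lt0r_neq0 ?det_edge_matrix_gt0.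
have -> : \det (gram_matrix v) =
    (e 0 i0 * e 0 i1 * e 0 i2 * e 0 i3) ^+ 2 / \det (edge_matrix p).
  by rewrite gram_matrixE edge_matrixE !det_mulmx !det_tr -det_normals_vertices; field.
by field; rewrite D_neq0 !e_neq0.
Qed.

Lemma Z2_edge_matrix : Z2_symmetric p ->
  edge_matrix p = z2_mx (cos (edge_len p i0 i1)) (cos (edge_len p i0 i2))
                        (cos (edge_len p i0 i3)) (cos (edge_len p i2 i3)).
Proof.
case=> M [MMt [p01 p10 p23 p32]].
have dotvM x y : dotv (x *m M) (y *m M) = dotv x y.
  by rewrite /dotv trmx_mul !mulmxA -(mulmxA x) MMt mulmx1.
have d13 : dotv (p i1) (p i3) = dotv (p i0) (p i2) by rewrite -p01 -p23 dotvM.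
have d12 : dotv (p i1) (p i2) = dotv (p i0) (p i3) by rewrite -p01 -p32 dotvM.
rewrite edge_matrixE vecs_mx_mul_tr; apply/matrixP => i j; rewrite !mxE !cos_edge_len.
by case: (ord4P i) => ->; case: (ord4P j) => ->;
  rewrite //= ?p_unit // dotvC ?d12 ?d13.
Qed.

End Tetrahedron.

Lemma z2_dihedral_cos_relations (R : realType) (Q : 'M[R]_4) a b c d :
  Q = z2_mx a b c d -> 0 < \det Q -> 0 < cofactor Q i0 i0 -> 0 < cofactor Q i2 i2 ->
  let k := cofactor Q in let u2 := k i0 i0 * k i2 i2 / \det Q in
  let cos_ij i j := - k i j / Num.sqrt (k i i * k j j) in
  [/\ u2 * (1 - cos_ij i2 i3 * cos_ij i0 i1) = 1 - a * d,
      u2 * (cos_ij i2 i3 - cos_ij i0 i1) = d - a,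
      u2 ^+ 2 * ((1 - cos_ij i2 i3 ^+ 2) * (1 - cos_ij i0 i1 ^+ 2)) =
        (1 - a ^+ 2) * (1 - d ^+ 2),
      u2 * (1 - cos_ij i1 i3 ^+ 2) = 1 - b ^+ 2 &
      u2 * (1 - cos_ij i1 i2 ^+ 2) = 1 - c ^+ 2].
Proof.
move=> QE D_gt0 k00_gt0 k22_gt0 k u2 cos_ij; rewrite {}/cos_ij {}/u2.
have [k11 k33] := z2_mx_cofactor_diag QE.
have [rel_ad rel_da rel_a rel_d [rel_b rel_c]] := z2_mx_cofactor_relations QE.
rewrite -/k in k11 k33 k00_gt0 k22_gt0 rel_ad rel_da rel_a rel_d rel_b rel_c.
have D_neq0 := lt0r_neq0 D_gt0.
have k00_neq0 := lt0r_neq0 k00_gt0; have k22_neq0 := lt0r_neq0 k22_gt0.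
rewrite k11 k33 -!expr2 !sqrtr_sqr !ger0_norm ?ltW //.
have cos_sqr i j : (- k i j / Num.sqrt (k i0 i0 * k i2 i2)) ^+ 2 =
    k i j ^+ 2 / (k i0 i0 * k i2 i2).
  by rewrite expr_div_n sqrrN sqr_sqrtr // mulr_ge0 ?ltW.
have sq : (1 - a ^+ 2) * (1 - d ^+ 2) =
    \det Q * (1 - a ^+ 2) * (\det Q * (1 - d ^+ 2)) / \det Q ^+ 2 by field.
rewrite !cos_sqr sq -rel_a -rel_d; split; try apply: (mulfI D_neq0).
all: rewrite -?rel_ad -?rel_da -?rel_b -?rel_c; field.
all: by rewrite k00_neq0 k22_neq0 D_neq0.
Qed.

Section SineRatios.
Variable R : realType.
Implicit Types u x y s t : R.

Lemma sqr_sin_half t : sin (t / 2) ^+ 2 = (1 - cos t) / 2.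
Proof. by rewrite {2}(splitr t) cosD -!expr2 cos2sin2; lra. Qed.

Lemma mul_sin_sin s t : sin s * sin t = (cos (s - t) - cos (s + t)) / 2.
Proof. by rewrite cosB cosD; lra. Qed.

Let sqr_inj (a b : R) : 0 <= a -> 0 <= b -> a ^+ 2 = b ^+ 2 -> a = b.
Proof. by move=> a0 b0; apply: (pexpIrn (isT : (0 < 2)%N)); rewrite nnegrE. Qed.

Lemma sin_ratio u x s : 0 <= u -> 0 <= x <= pi -> 0 < s < pi ->
  u ^+ 2 * (1 - cos x ^+ 2) = 1 - cos s ^+ 2 -> u = sin s / sin x.
Proof.
move=> u0 x0pi s0pi sqr_eq; have sin_s_gt0 := sin_gt0_pi s0pi.
have usin : u * sin x = sin s.
  apply: sqr_inj; [exact: mulr_ge0 u0 (sin_ge0_pi x0pi) | exact: ltW |].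
  by rewrite exprMn !sin2cos2.
rewrite -usin mulfK //; apply: contraTneq sin_s_gt0 => sin_x0.
by rewrite -usin sin_x0 mulr0 ltxx.
Qed.

Lemma half_angle_ratios u x y s t : 0 <= u ->
  0 <= x <= pi -> 0 <= y <= pi -> 0 < s < pi -> 0 < t < pi ->
  u ^+ 2 * (1 - cos x * cos y) = 1 - cos s * cos t ->
  u ^+ 2 * (cos x - cos y) = cos t - cos s ->
  u ^+ 4 * ((1 - cos x ^+ 2) * (1 - cos y ^+ 2)) = (1 - cos s ^+ 2) * (1 - cos t ^+ 2) ->
  u = sin ((s + t) / 2) / sin ((x + y) / 2) /\ u * sin ((y - x) / 2) = sin ((s - t) / 2).
Proof.
move=> u0 /andP[x0 xpi] /andP[y0 ypi] /andP[s0 spi] /andP[t0 tpi] eq_cc eq_diff eq_ss.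
have sins : u ^+ 2 * (sin x * sin y) = sin s * sin t.
  apply: sqr_inj.
  - by rewrite !mulr_ge0 ?sqr_ge0 ?sin_ge0_pi ?x0 ?y0.
  - by rewrite mulr_ge0 ?sin_ge0_pi ?ltW ?s0 ?t0.
  by rewrite !exprMn !sin2cos2 -eq_ss; ring.
have st_gt0 : 0 < sin ((s + t) / 2).
  by apply: sin_gt0_pi; rewrite divr_gt0 ?addr_gt0 //= ltr_pdivrMr //; lra.
have usum : u * sin ((x + y) / 2) = sin ((s + t) / 2).
  apply: sqr_inj.
  - by rewrite mulr_ge0 // sin_ge0_pi //; apply/andP; split; lra.
  - exact: ltW.
  by rewrite exprMn !sqr_sin_half !cosD; lra.
split.
  rewrite -usum mulfK //; apply: contraTneq st_gt0 => xy0.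
  by rewrite -usum xy0 mulr0 ltxx.
(* Multiply by sin ((s + t) / 2) > 0 and use product-to-sum on both sides. *)
apply: (mulfI (lt0r_neq0 st_gt0)); rewrite -{1}usum.
have -> : u * sin ((x + y) / 2) * (u * sin ((y - x) / 2)) =
    u ^+ 2 * (sin ((x + y) / 2) * sin ((y - x) / 2)) by ring.
rewrite !mul_sin_sin.
have -> : (x + y) / 2 - (y - x) / 2 = x by lra.
have -> : (x + y) / 2 + (y - x) / 2 = y by lra.
have -> : (s + t) / 2 - (s - t) / 2 = t by lra.
have -> : (s + t) / 2 + (s - t) / 2 = s by lra.
by rewrite mulrA eq_diff.
Qed.

End SineRatios.

Theorem proposition1 (R : realType) (p v : 'I_4 -> 'rV[R]_4) :
  spherical_tetrahedron p ->
  (forall i, outer_unit_normal p v i) ->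
  Z2_symmetric p ->
  let lA := edge_len p i0 i1 in let lB := edge_len p i0 i2 in
  let lC := edge_len p i0 i3 in let lD := edge_len p i2 i3 in
  let A := dihedral v i2 i3 in let B := dihedral v i1 i3 in
  let C := dihedral v i1 i2 in let D := dihedral v i0 i1 in
  let Gs := edge_matrix p in let G := gram_matrix v in
  let u := Num.sqrt (cofactor Gs i0 i0 * cofactor Gs i2 i2 / \det Gs) in
  let w := Num.sqrt (cofactor G i0 i0 * cofactor G i2 i2 / \det G) in
  [/\ u = sin ((lA + lD) / 2) / sin ((A + D) / 2),
      u * sin ((D - A) / 2) = sin ((lA - lD) / 2),
      u = sin lB / sin B,
      u = sin lC / sin C &
      u = w^-1].
Proof.
move=> [p_unit p_free] v_normal Z2 lA lB lC lD A B C D Gs G u w.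
have Gs_z2 := Z2_edge_matrix p_unit Z2.
have Gs_gt0 := det_edge_matrix_gt0 p_unit p_free.
have k_gt0 := cofactor_edge_matrix_gt0 p_unit p_free v_normal.
have cosE := cos_dihedral_cofactor p_unit p_free v_normal.
have edge_itv := edge_len_gt0_ltpi p_unit p_free.
have angle_itv := dihedral_itv v_normal.
have [rel_AD rel_DA rel_sin rel_B rel_C] :=
  z2_dihedral_cos_relations Gs_z2 Gs_gt0 (k_gt0 i0) (k_gt0 i2).
have u2_gt0 : 0 < cofactor Gs i0 i0 * cofactor Gs i2 i2 / \det Gs.
  by rewrite divr_gt0 // mulr_gt0.
have u_sqr : (u : R) ^+ 2 = cofactor Gs i0 i0 * cofactor Gs i2 i2 / \det Gs.
  by rewrite sqr_sqrtr // ltW.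
have [AD_sum AD_diff] : u = sin ((lA + lD) / 2) / sin ((A + D) / 2) /\
    u * sin ((D - A) / 2) = sin ((lA - lD) / 2).
  apply: half_angle_ratios; rewrite ?sqrtr_ge0 ?angle_itv ?edge_itv //.
  - by rewrite u_sqr !cosE.
  - by rewrite u_sqr !cosE.
  - by rewrite (exprM u 2 2) u_sqr !cosE.
split => //.
- by apply: sin_ratio; rewrite ?sqrtr_ge0 ?angle_itv ?edge_itv // u_sqr cosE.
- by apply: sin_ratio; rewrite ?sqrtr_ge0 ?angle_itv ?edge_itv // u_sqr cosE.
have [k11 k33] := z2_mx_cofactor_diag Gs_z2.
apply/esym/mulr1_eq; rewrite mulrC -sqrtrM ?ltW //.
have := gram_cofactor_duality p_unit p_free v_normal.
by rewrite /= k11 k33 mulrC => ->; exact: sqrtr1.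
Qed.
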